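(* Let $A$ and $B$ be rings, $f: A\to B$ a ring homomorphism and $J$ a proper ideal of $B$ such that $f^{-1}(J)\subseteq \mathrm{nil}(A)$. Then $A\bowtie^{f}J$ is a nil-Armendariz ring if and only if $f(A)+J$ is a nil-Armendariz ring.
   Context: All rings are associative with identity (not necessarily commutative), ring homomorphisms are unital, and ideals are two-sided. $\mathrm{nil}(R)$ denotes the set of nilpotent elements of a ring $R$, and $\mathrm{nil}(R)[x]$ the set of polynomials all of whose coefficients lie in $\mathrm{nil}(R)$. For a ring homomorphism $f:A\to B$ and an ideal $J$ of $B$, the amalgamation is the subring $A\bowtie^{f}J=\{(a,f(a)+j)\mid a\in A,\ j\in J\}$ of $A\times B$; $f(A)+J=\{f(a)+j: a\in A, j\in J\}$ is a subring of $B$. A ring $R$ is nil-Armendariz if whenever $p(x)=\sum_{i=0}^n a_ix^i$ and $q(x)=\sum_{j=0}^m b_jx^j$ in $R[x]$ satisfy $p(x)q(x)\in\mathrm{nil}(R)[x]$, then $a_ib_j\in\mathrm{nil}(R)$ for all $i,j$. *)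

From HB Require Import structures.
From mathcomp Require Import all_boot all_order all_algebra.
From Stdlib Require Import ClassicalEpsilon.
Set Implicit Arguments. Unset Strict Implicit. Unset Printing Implicit Defensive.
Import GRing.Theory.
Local Open Scope ring_scope.

Definition nilpotent (R : nzRingType) (x : R) : Prop := exists n : nat, x ^+ n = 0.

(* R is nil-Armendariz: p q in R[x] with p q in nil(R)[x] imply
   a_i b_j in nil(R) for all coefficients a_i of p and b_j of q.
   ({poly R} over a non-commutative ring R: x commutes with coefficients.) *)
Definition nil_armendariz (R : nzRingType) : Prop :=
  forall p q : {poly R},
    (forall k : nat, nilpotent (p * q)`_k) ->
    forall i j : nat, nilpotent (p`_i * q`_j).

Definition two_sided_ideal (R : nzRingType) (J : {pred R}) : Prop :=
  [/\ 0 \in J,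
      (forall x y, x \in J -> y \in J -> x - y \in J),
      (forall r x, x \in J -> r * x \in J) &
      (forall r x, x \in J -> x * r \in J)].

Record ideal (R : nzRingType) := Ideal {
  ideal_pred :> {pred R};
  idealP : two_sided_ideal ideal_pred }.

Definition pbool (P : Prop) : bool :=
  if excluded_middle_informative P then true else false.

Lemma pboolP (P : Prop) : reflect P (pbool P).
Proof. rewrite /pbool; case: excluded_middle_informative => H; constructor => //. Qed.

Section Amalgamation.
Variables (A B : nzRingType) (f : {rmorphism A -> B}) (J : ideal B).
Let HJ : two_sided_ideal J := idealP J.

Definition amalg_pred : {pred A * B} :=
  fun x => pbool (exists a : A, exists2 j : B, j \in J & x = (a, f a + j)).

Definition fAJ_pred : {pred B} :=
  fun b => pbool (exists a : A, exists2 j : B, j \in J & b = f a + j).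

Lemma amalg_memP x :
  reflect (exists a : A, exists2 j : B, j \in J & x = (a, f a + j)) (x \in amalg_pred).
Proof. exact: pboolP. Qed.

Lemma fAJ_memP b :
  reflect (exists a : A, exists2 j : B, j \in J & b = f a + j) (b \in fAJ_pred).
Proof. exact: pboolP. Qed.

Lemma amalg_memE x : (x \in amalg_pred) = (x.2 - f x.1 \in J).
Proof.
case: HJ => J0 JB Jl Jr.
apply/amalg_memP/idP => [[a [j Jj ->]] | H].
  by rewrite /= addrC addKr.
by exists x.1; exists (x.2 - f x.1) => //; rewrite addrC subrK; case: x {H}.
Qed.

Lemma amalg_subring : subring_closed amalg_pred.
Proof.
case: HJ => J0 JB Jl Jr.
have JD u v : u \in J -> v \in J -> u + v \in J.
  by move=> Hu Hv; rewrite -[v]opprK; apply: (JB) => //; rewrite -sub0r; apply: (JB).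
split.
- by rewrite amalg_memE /= rmorph1 subrr.
- move=> x y; rewrite !amalg_memE /= rmorphB => Hx Hy.
  have -> : x.2 - y.2 - (f x.1 - f y.1) = (x.2 - f x.1) - (y.2 - f y.1).
    by rewrite !opprD addrACA.
  exact: (JB).
- move=> x y; rewrite !amalg_memE /= rmorphM => Hx Hy.
  have -> : x.2 * y.2 - f x.1 * f y.1
          = x.2 * (y.2 - f y.1) + (x.2 - f x.1) * f y.1.
    by rewrite mulrBr mulrBl addrA subrK.
  by apply: (JD); [apply: (Jl) | apply: (Jr)].
Qed.

Lemma fAJ_subring : subring_closed fAJ_pred.
Proof.
case: HJ => J0 JB Jl Jr.
have JD u v : u \in J -> v \in J -> u + v \in J.
  by move=> Hu Hv; rewrite -[v]opprK; apply: (JB) => //; rewrite -sub0r; apply: (JB).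
split.
- by apply/fAJ_memP; exists 1; exists 0 => //; rewrite rmorph1 addr0.
- move=> x y /fAJ_memP [a [j Jj ->]] /fAJ_memP [b [k Jk ->]]; apply/fAJ_memP.
  exists (a - b); exists (j - k); first exact: (JB).
  by rewrite rmorphB opprD !addrA; congr (_ + _); rewrite -!addrA; congr (_ + _);
     rewrite addrC.
- move=> x y /fAJ_memP [a [j Jj ->]] /fAJ_memP [b [k Jk ->]]; apply/fAJ_memP.
  exists (a * b); exists (f a * k + j * f b + j * k).
    by apply: (JD); [apply: (JD); [apply: (Jl) | apply: (Jr)] | apply: (Jl)].
  by rewrite rmorphM mulrDl !mulrDr !addrA.
Qed.

HB.instance Definition _ := GRing.isSubringClosed.Build (A * B)%type amalg_pred amalg_subring.
HB.instance Definition _ := GRing.isSubringClosed.Build B fAJ_pred fAJ_subring.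

Definition amalg := {x : A * B | x \in amalg_pred}.
HB.instance Definition _ := [isSub for (@proj1_sig _ _ : amalg -> _)].
HB.instance Definition _ := [Choice of amalg by <:].
HB.instance Definition _ := [SubChoice_isSubNzRing of amalg by <:].

Definition fAJ := {x : B | x \in fAJ_pred}.
HB.instance Definition _ := [isSub for (@proj1_sig _ _ : fAJ -> _)].
HB.instance Definition _ := [Choice of fAJ by <:].
HB.instance Definition _ := [SubChoice_isSubNzRing of fAJ by <:].

End Amalgamation.

From HB Require Import structures.
From mathcomp Require Import all_boot all_order all_algebra.
Import GRing.Theory.
Local Open Scope ring_scope.

(* The second projection (a, f a + j) |-> f a + j is a surjective ring morphism
   from A ⋈^f J onto f(A) + J.  Its kernel consists of the (a, 0) with
   f a in J, which are nilpotent by hypothesis.  Nil-Armendariz transfers both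
   ways along a surjective ring morphism with nil kernel: polynomials over the
   target lift coefficientwise, and an element is nilpotent iff its image is. *)

Lemma nilpotent_exprn (R : nzRingType) (x : R) n :
  nilpotent (x ^+ n) -> nilpotent x.
Proof. by case=> m xnm0; exists (n * m)%N; rewrite exprM. Qed.

Lemma exprn_pair (R S : nzRingType) (a : R) (b : S) n :
  (a, b) ^+ n = (a ^+ n, b ^+ n).
Proof. by elim: n => [|n IHn]; rewrite ?expr0 // !exprS IHn. Qed.

Section NilArmendarizTransfer.
Variables (R S : nzRingType) (g : {rmorphism R -> S}).

Lemma rmorph_nilpotent x : nilpotent x -> nilpotent (g x).
Proof. by case=> n xn0; exists n; rewrite -rmorphXn xn0 rmorph0. Qed.

Lemma map_poly_surj : (forall y, exists x, g x = y) ->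
  forall p : {poly S}, exists P : {poly R}, map_poly g P = p.
Proof.
move=> g_surj p.
have lift y : exists x, g x == y by have [x <-] := g_surj y; exists x.
exists (\poly_(i < size p) xchoose (lift p`_i)).
apply/polyP => i; rewrite coef_map coef_poly; case: ltnP => [_ | le_p_i].
  exact/eqP/(xchooseP (lift _)).
by rewrite raddf0 nth_default.
Qed.

Hypothesis ker_nil : forall x, g x = 0 -> nilpotent x.

Lemma rmorph_nilpotentE x : nilpotent (g x) <-> nilpotent x.
Proof.
split=> [[n gxn0] | ]; last exact: rmorph_nilpotent.
by apply: (@nilpotent_exprn _ _ n); apply: ker_nil; rewrite rmorphXn.
Qed.

Lemma nil_armendariz_rmorph : nil_armendariz S -> nil_armendariz R.
Proof.
move=> nilS P Q PQnil i j; apply/rmorph_nilpotentE; rewrite rmorphM -!coef_map.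
by apply: nilS => k; rewrite -rmorphM coef_map; apply/rmorph_nilpotentE.
Qed.

Lemma nil_armendariz_rmorph_surj : (forall y, exists x, g x = y) ->
  nil_armendariz R -> nil_armendariz S.
Proof.
move=> g_surj nilR p q.
have [P <-] := map_poly_surj g_surj p; have [Q <-] := map_poly_surj g_surj q.
move=> pqnil i j; rewrite !coef_map -rmorphM; apply/rmorph_nilpotentE.
by apply: nilR => k; apply/rmorph_nilpotentE; rewrite -coef_map rmorphM.
Qed.

End NilArmendarizTransfer.

Section AmalgamationProjection.
Variables (A B : nzRingType) (f : {rmorphism A -> B}) (J : ideal B).

Lemma amalg_snd_mem (x : amalg f J) : (val x).2 \in fAJ_pred f J.
Proof.
have := valP x; rewrite amalg_memE => Jx.
apply/fAJ_memP; exists (val x).1; exists ((val x).2 - f (val x).1) => //.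
by rewrite addrC subrK.
Qed.

Definition amalg_snd (x : amalg f J) : fAJ f J := Sub (val x).2 (amalg_snd_mem x).

Lemma val_amalg_snd x : val (amalg_snd x) = (val x).2.
Proof. by rewrite SubK. Qed.

Lemma amalg_snd_is_zmod_morphism : zmod_morphism amalg_snd.
Proof. by move=> x y; apply: val_inj; rewrite !(val_amalg_snd, rmorphB). Qed.
HB.instance Definition _ :=
  GRing.isZmodMorphism.Build _ _ amalg_snd amalg_snd_is_zmod_morphism.

Lemma amalg_snd_is_monoid_morphism : monoid_morphism amalg_snd.
Proof.
split; first by apply: val_inj; rewrite val_amalg_snd !rmorph1.
by move=> x y; apply: val_inj; rewrite !(val_amalg_snd, rmorphM).
Qed.
HB.instance Definition _ :=
  GRing.isMonoidMorphism.Build _ _ amalg_snd amalg_snd_is_monoid_morphism.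

Lemma amalg_snd_surj (y : fAJ f J) : exists x, amalg_snd x = y.
Proof.
have /fAJ_memP [a [j Jj y_def]] := valP y.
have amalg_ay : (a, val y) \in amalg_pred f J.
  by apply/amalg_memP; exists a; exists j; rewrite // y_def.
by exists (Sub (a, val y) amalg_ay); apply: val_inj; rewrite val_amalg_snd SubK.
Qed.

Lemma amalg_snd_ker_nilpotent : (forall a, f a \in J -> nilpotent a) ->
  forall x, amalg_snd x = 0 -> nilpotent x.
Proof.
move=> fJ_nil [[a b] ab_mem] /(congr1 val); rewrite val_amalg_snd rmorph0 /= => b0.
have Jfa : b - f a \in J by move: (ab_mem); rewrite amalg_memE.
have [m am0] : nilpotent a.
  apply: fJ_nil; rewrite -[f a]opprK -[- - f a]sub0r.
  by case: (idealP J) => J0 JB _ _; apply: JB; rewrite // -sub0r -b0.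
exists m.+1; apply: val_inj; rewrite rmorphXn rmorph0 /= exprn_pair b0.
by rewrite !exprSr am0 mul0r mulr0.
Qed.

End AmalgamationProjection.

Theorem theorem3p1 (A B : nzRingType) (f : {rmorphism A -> B}) (J : ideal B) :
  (1 : B) \notin J ->
  (forall a : A, f a \in J -> nilpotent a) ->
  nil_armendariz (amalg f J) <-> nil_armendariz (fAJ f J).
Proof.
move=> _ fJ_nil; have ker_nil := @amalg_snd_ker_nilpotent _ _ f J fJ_nil.
split; first exact: nil_armendariz_rmorph_surj ker_nil (@amalg_snd_surj _ _ f J).
exact: nil_armendariz_rmorph ker_nil.
Qed.
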